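(* Let $b:\mathbb R\to\mathbb R$ be a function (bottom topography). Let $\rho,p,u,x,\check B$ be grid functions satisfying the scheme (M) at every node, where either $b$ is constant and $\check B\equiv0$, or $u+\check u\neq0$ at every node and $$\check B=\frac{b(\hat x)-b(\check x)}{\tau\,(u+\check u)}.$$ Then at every node the discrete energy conservation law $$\Big(\frac{u^2}{2}+\frac{p}{2\sqrt p-\rho}+\frac{\alpha^2(2\sqrt p-\rho)}{2p\rho}-\frac{b(\hat x)+b(x)}{2}\Big)_{\check t}+\Big(\frac{u^++\check u^+}{2}\,Q\Big)_{\bar s}=0$$ holds.
   Context: Fix mesh steps $\tau>0$, $h>0$ and a constant $\alpha\in\mathbb R$. A grid function is a real-valued function $f=f(t,s)$ on the uniform orthogonal mesh $\{(n\tau,kh): n,k\in\mathbb Z\}$. Shifts: $\hat f=f(t+\tau,s)$, $\check f=f(t-\tau,s)$, $f^+=f_+=f(t,s+h)$, $f^-=f_-=f(t,s-h)$; a shift applied to a composite expression shifts the whole expression (e.g. $\check u_s$ is $u_s$ at $(t-\tau,s)$, $\check u^+$ is $u$ at $(t-\tau,s+h)$). Differences: $f_t=(\hat f-f)/\tau$, $f_{\check t}=(f-\check f)/\tau$, $f_s=(f_+-f)/h$, $f_{\bar s}=(f-f_-)/h$. Let $\rho>0$, $p>0$, $u$, $x$, $\check B$ be grid functions, and set $$Q=\Big(\frac{4}{\rho\check\rho}-\frac{2}{\sqrt p}\Big(\frac1\rho+\frac1{\check\rho}\Big)+\frac1p\Big)^{-1}-\frac{\alpha^2}{\sqrt p}$$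 (the bracket being assumed nonzero). The scheme (M) (shallow water MHD in mass Lagrangian coordinates) is the requirement that at every node $$\rho_{\check t}+\tfrac12\rho\check\rho\,(u_s+\check u_s)=0,\quad u_{\check t}+Q_{\bar s}-\check B=0,\quad x_t=u,\quad \check x_s+x_s=\frac{1}{\sqrt{\check p}}+\frac1{\sqrt p}=\frac{2}{\check\rho}.$$ *)

From Stdlib Require Import Reals ZArith.
Open Scope R_scope.

(* A grid function: f n k is the value at the node (n*tau, k*h). *)
Definition grid := Z -> Z -> R.

Definition hat (f : grid) : grid := fun n k => f (n + 1)%Z k.
Definition chk (f : grid) : grid := fun n k => f (n - 1)%Z k.
Definition splus (f : grid) : grid := fun n k => f n (k + 1)%Z.
Definition sminus (f : grid) : grid := fun n k => f n (k - 1)%Z.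

Definition d_t (tau : R) (f : grid) : grid := fun n k => (hat f n k - f n k) / tau.
Definition d_tb (tau : R) (f : grid) : grid := fun n k => (f n k - chk f n k) / tau.
Definition d_s (h : R) (f : grid) : grid := fun n k => (splus f n k - f n k) / h.
Definition d_sb (h : R) (f : grid) : grid := fun n k => (f n k - sminus f n k) / h.

Definition Qbr (rho p : grid) : grid := fun n k =>
  4 / (rho n k * chk rho n k)
  - 2 / sqrt (p n k) * (1 / rho n k + 1 / chk rho n k)
  + 1 / p n k.

Definition Qf (alpha : R) (rho p : grid) : grid := fun n k =>
  / Qbr rho p n k - alpha ^ 2 / sqrt (p n k).

(* The scheme (M), at every node; Bc stands for the grid function \check B. *)
Definition schemeM (tau h alpha : R) (rho p u x Bc : grid) : Prop :=
  forall n k : Z,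
    d_tb tau rho n k
      + 1 / 2 * rho n k * chk rho n k * (d_s h u n k + chk (d_s h u) n k) = 0
    /\ d_tb tau u n k + d_sb h (Qf alpha rho p) n k - Bc n k = 0
    /\ d_t tau x n k = u n k
    /\ chk (d_s h x) n k + d_s h x n k = 1 / sqrt (chk p n k) + 1 / sqrt (p n k)
    /\ 1 / sqrt (chk p n k) + 1 / sqrt (p n k) = 2 / chk rho n k.

Definition energy (alpha : R) (b : R -> R) (rho p u x : grid) : grid := fun n k =>
  u n k ^ 2 / 2 + p n k / (2 * sqrt (p n k) - rho n k)
  + alpha ^ 2 * (2 * sqrt (p n k) - rho n k) / (2 * p n k * rho n k)
  - (b (hat x n k) + b (x n k)) / 2.

Definition eflux (alpha : R) (rho p u : grid) : grid := fun n k =>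
  (splus u n k + chk (splus u) n k) / 2 * Qf alpha rho p n k.

From Stdlib Require Import Reals ZArith Lra.
Open Scope R_scope.

(* Write a, c, d for the square roots of p at the time levels n-1, n, n+1.
   The last equation of (M) makes 1/rho the mean of 1/c and 1/d, so rho is
   the harmonic mean 2cd/(c+d).  With this the internal energy
   pot(p, rho) = p/(2 sqrt p - rho) + alpha^2 (2 sqrt p - rho)/(2 p rho)
   collapses to (c+d)/2 + alpha^2/(2cd), and the bracket defining Q
   factors as (2/rho - 1/c)(2/check rho - 1/c) = 1/(ad), i.e. Q = ad - alpha^2/c.
   Together these give the exact chain rule
     pot - check pot = (1/check rho - 1/rho) Q,
   and the mass equation turns 1/check rho - 1/rho into tau/2 (u_s + check u_s).
   The momentum equation and the definition of check B handle the kinetic and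
   topographic parts, and a discrete product rule closes the balance. *)

Definition pot (alpha P r : R) : R :=
  P / (2 * sqrt P - r) + alpha ^ 2 * (2 * sqrt P - r) / (2 * P * r).

(* The bracket in Q is a product of two factors; this is what makes Q exact. *)
Lemma bracket_factor (P r r0 : R) : 0 < P -> r <> 0 -> r0 <> 0 ->
  4 / (r * r0) - 2 / sqrt P * (1 / r + 1 / r0) + 1 / P
  = (2 / r - 1 / sqrt P) * (2 / r0 - 1 / sqrt P).
Proof.
  intros HP Hr Hr0.
  pose proof (sqrt_lt_R0 _ HP) as Hc.
  replace (1 / P) with (1 / (sqrt P * sqrt P)) by (rewrite sqrt_sqrt; lra).
  field; lra.
Qed.

Lemma pot_harmonic (alpha P Pn r : R) : 0 < P -> 0 < Pn ->
  2 / r = 1 / sqrt P + 1 / sqrt Pn ->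
  pot alpha P r = (sqrt P + sqrt Pn) / 2 + alpha ^ 2 / (2 * sqrt P * sqrt Pn).
Proof.
  intros HP HPn Hr; unfold pot.
  assert (EP : P = sqrt P * sqrt P) by (rewrite sqrt_sqrt; lra).
  pose proof (sqrt_lt_R0 _ HP) as Hc; pose proof (sqrt_lt_R0 _ HPn) as Hd.
  set (c := sqrt P) in *; set (d := sqrt Pn) in *; clearbody c d; subst P.
  assert (Hr0 : r <> 0).
  { intros ->; unfold Rdiv in Hr; rewrite Rinv_0, Rmult_0_r in Hr.
    assert (0 < / c) by (apply Rinv_0_lt_compat; lra).
    assert (0 < / d) by (apply Rinv_0_lt_compat; lra); lra. }
  assert (Er : r = 2 * c * d / (c + d)).
  { replace r with (2 / (2 / r)) by (field; lra).
    rewrite Hr; field; lra. }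
  rewrite Er; field; repeat split; nra.
Qed.

(* Exact discrete chain rule for the internal energy across one time step:
   P0, P, P1 are consecutive pressures and r0, r the intermediate densities. *)
Lemma pot_increment (alpha P0 P P1 r0 r : R) : 0 < P0 -> 0 < P -> 0 < P1 ->
  2 / r0 = 1 / sqrt P0 + 1 / sqrt P -> 2 / r = 1 / sqrt P + 1 / sqrt P1 ->
  0 < r -> 0 < r0 ->
  pot alpha P r - pot alpha P0 r0
  = (1 / r0 - 1 / r)
    * (/ (4 / (r * r0) - 2 / sqrt P * (1 / r + 1 / r0) + 1 / P) - alpha ^ 2 / sqrt P).
Proof.
  intros HP0 HP HP1 Hr0 Hr Hrp Hr0p.
  pose proof (sqrt_lt_R0 _ HP0); pose proof (sqrt_lt_R0 _ HP); pose proof (sqrt_lt_R0 _ HP1).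
  rewrite (pot_harmonic alpha P P1 r), (pot_harmonic alpha P0 P r0),
    bracket_factor by lra.
  assert (E : 2 / r - 1 / sqrt P = 1 / sqrt P1) by lra.
  assert (E0 : 2 / r0 - 1 / sqrt P = 1 / sqrt P0) by lra.
  assert (V : 1 / r0 - 1 / r = (1 / sqrt P0 - 1 / sqrt P1) / 2) by lra.
  rewrite E, E0, V; field; lra.
Qed.

Section SchemeConsequences.

Variables (tau h alpha : R) (rho p u x Bc : grid).
Hypothesis tau_pos : 0 < tau.
Hypothesis rho_pos : forall n k, 0 < rho n k.
Hypothesis p_pos : forall n k, 0 < p n k.
Hypothesis scheme : schemeM tau h alpha rho p u x Bc.

Lemma specific_volume_law (n k : Z) :
  1 / chk rho n k - 1 / rho n k = - tau / 2 * (d_s h u n k + chk (d_s h u) n k).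
Proof.
  destruct (scheme n k) as [Hmass _].
  pose proof (rho_pos n k); pose proof (rho_pos (n - 1) k).
  unfold d_tb, chk in *.
  set (S := d_s h u n k + d_s h u (n - 1)%Z k) in *; clearbody S.
  assert (Hd : (rho n k - rho (n - 1)%Z k) / tau
                = - (1 / 2 * rho n k * rho (n - 1)%Z k * S)) by lra.
  replace (1 / rho (n - 1)%Z k - 1 / rho n k)
    with (tau * ((rho n k - rho (n - 1)%Z k) / tau) / (rho n k * rho (n - 1)%Z k))
    by (field; lra).
  rewrite Hd; field; lra.
Qed.

Lemma velocity_law (n k : Z) :
  u n k - chk u n k = tau * (Bc n k - d_sb h (Qf alpha rho p) n k).
Proof.
  destruct (scheme n k) as [_ [Hmom _]].
  unfold d_tb in Hmom.
  apply (Rmult_eq_reg_r (/ tau)); [| apply Rinv_neq_0_compat; lra].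
  replace (tau * (Bc n k - d_sb h (Qf alpha rho p) n k) * / tau)
    with (Bc n k - d_sb h (Qf alpha rho p) n k) by (field; lra).
  unfold Rdiv in Hmom; lra.
Qed.

Lemma potential_law (n k : Z) :
  pot alpha (p n k) (rho n k) - pot alpha (chk p n k) (chk rho n k)
  = (1 / chk rho n k - 1 / rho n k) * Qf alpha rho p n k.
Proof.
  destruct (scheme n k) as [_ [_ [_ [_ Hrel]]]].
  destruct (scheme (n + 1)%Z k) as [_ [_ [_ [_ Hrel1]]]].
  unfold chk in *; rewrite Z.add_simpl_r in Hrel1.
  unfold Qf, Qbr, chk.
  apply pot_increment with (P1 := p (n + 1)%Z k); auto; lra.
Qed.

Lemma source_work (b : R -> R) :
  ((exists c : R, forall y, b y = c) /\ (forall n k, Bc n k = 0))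
  \/ ((forall n k, u n k + chk u n k <> 0) /\
      (forall n k, Bc n k = (b (hat x n k) - b (chk x n k)) / (tau * (u n k + chk u n k)))) ->
  forall n k, tau * Bc n k * (u n k + chk u n k) = b (hat x n k) - b (chk x n k).
Proof.
  intros [[[c Hc] HB] | [Hne HB]] n k.
  - rewrite HB, !Hc; ring.
  - rewrite HB; field; split; [apply Hne | lra].
Qed.

End SchemeConsequences.

Lemma energy_time_difference (tau alpha : R) (b : R -> R) (rho p u x : grid) (n k : Z) :
  d_tb tau (energy alpha b rho p u x) n k
  = ((u n k ^ 2 - chk u n k ^ 2) / 2
     + (pot alpha (p n k) (rho n k) - pot alpha (chk p n k) (chk rho n k))
     - (b (hat x n k) - b (chk x n k)) / 2) / tau.
Proof.
  unfold d_tb, energy, pot, chk, hat.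
  rewrite Z.sub_add; unfold Rdiv; ring.
Qed.

(* Final bookkeeping: with the three laws substituted, the kinetic, internal
   and topographic terms telescope against the flux by a discrete product rule. *)
Lemma energy_balance_algebra (tau h U U0 Up U0p Q Qm Bw Bd : R) :
  0 < tau -> 0 < h ->
  U - U0 = tau * (Bw - (Q - Qm) / h) -> tau * Bw * (U + U0) = Bd ->
  ((U ^ 2 - U0 ^ 2) / 2 + - tau / 2 * ((Up - U) / h + (U0p - U0) / h) * Q - Bd / 2) / tau
  + ((Up + U0p) / 2 * Q - (U + U0) / 2 * Qm) / h = 0.
Proof.
  intros Htau Hh HU HB.
  rewrite <- HB.
  replace (U ^ 2 - U0 ^ 2) with ((U - U0) * (U + U0)) by ring.
  rewrite HU; field; lra.
Qed.

Theorem mainTheorem12 (tau h alpha : R) (b : R -> R) (rho p u x Bc : grid) :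
  0 < tau -> 0 < h ->
  (forall n k, 0 < rho n k) -> (forall n k, 0 < p n k) ->
  (forall n k, Qbr rho p n k <> 0) ->
  schemeM tau h alpha rho p u x Bc ->
  ((exists c : R, forall y, b y = c) /\ (forall n k, Bc n k = 0))
  \/ ((forall n k, u n k + chk u n k <> 0) /\
      (forall n k, Bc n k = (b (hat x n k) - b (chk x n k)) / (tau * (u n k + chk u n k)))) ->
  forall n k : Z,
    d_tb tau (energy alpha b rho p u x) n k + d_sb h (eflux alpha rho p u) n k = 0.
Proof.
  intros Htau Hh Hrho Hp _ HM Hb n k.
  rewrite energy_time_difference,
    (potential_law tau h alpha rho p u x Bc Hrho Hp HM),
    (specific_volume_law tau h alpha rho p u x Bc Htau Hrho HM).
  pose proof (velocity_law tau h alpha rho p u x Bc Htau HM n k) as Hvel.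
  pose proof (source_work tau u x Bc Htau b Hb n k) as Hsrc.
  unfold d_sb, eflux, d_s, chk, splus, sminus in *.
  rewrite Z.sub_add.
  apply energy_balance_algebra with (Bw := Bc n k); assumption.
Qed.
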